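(* Let $N$ be a positive integer, $R\in\{0,\dots,N\}$, $n\in\{1,\dots,N\}$, and let $X$ have the hypergeometric distribution $\Pr\{X=x\}=\binom Rx\binom{N-R}{n-x}/\binom Nn$ for $x\in\{0,\dots,n\}$ with $x\le R$ and $n-x\le N-R$, and $\Pr\{X=x\}=0$ for other $x\in\{0,\dots,n\}$. Let $r\in\{0,\dots,n\}$ with $R+n-N\le r\le R$, and let $\mathscr{A}=\{\vartheta\in\mathbb{Z}^+:r\le\vartheta\le R\}$, $\mathscr{B}=\{\vartheta\in\mathbb{Z}^+:R\le\vartheta\le r+N-n\}$. Then $$\Pr\{X\le r\}\le\frac{\binom Rr\binom{N-R}{n-r}}{\binom\vartheta r\binom{N-\vartheta}{n-r}}\ \text{ for }\vartheta\in\mathscr{A},\qquad \Pr\{X\ge r\}\le\frac{\binom Rr\binom{N-R}{n-r}}{\binom\vartheta r\binom{N-\vartheta}{n-r}}\ \text{ for }\vartheta\in\mathscr{B}.$$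
   Context: $\mathbb{Z}^+$ denotes the set of nonnegative integers. *)

From HB Require Import structures.
From mathcomp Require Import all_boot all_order all_algebra.
Set Implicit Arguments. Unset Strict Implicit. Unset Printing Implicit Defensive.
Import Order.TTheory GRing.Theory Num.Theory.
Local Open Scope ring_scope.

Definition hyp_pmf (F : realFieldType) (N R n x : nat) : F :=
  if ((x <= R) && (n - x <= N - R))%N
  then ('C(R, x) * 'C(N - R, n - x))%:R / ('C(N, n))%:R
  else 0.

Definition hyp_cdf_le (F : realFieldType) (N R n r : nat) : F :=
  \sum_(0 <= x < r.+1) hyp_pmf F N R n x.

Definition hyp_cdf_ge (F : realFieldType) (N R n r : nat) : F :=
  \sum_(r <= x < n.+1) hyp_pmf F N R n x.

Definition hyp_bound (F : realFieldType) (N R n r theta : nat) : F :=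
  ('C(R, r) * 'C(N - R, n - r))%:R / ('C(theta, r) * 'C(N - theta, n - r))%:R.

(** The weight [w(m, k) = C(m, k) C(N - m, n - k)] is totally positive of order
    two in [(m, k)]: for [m1 <= m2] and [k1 <= k2],
    [w(m1, k2) w(m2, k1) <= w(m1, k1) w(m2, k2)].  Hence for [x <= r <= theta <= R]
    the ratio [w(R, x) / w(theta, x)] is at most [w(R, r) / w(theta, r)], so
    [Pr{X = x} <= (w(R, r) / w(theta, r)) * w(theta, x) / C(N, n)], and summing
    over [x <= r] the [w(theta, x)] add up to at most [C(N, n)] by Vandermonde.
    The upper tail is symmetric. *)

From HB Require Import structures.
From mathcomp Require Import all_boot all_order all_algebra.
From mathcomp Require Import ring zify.
Import Order.TTheory GRing.Theory Num.Theory.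

(* [C(m + 1, k) / C(m, k) = (m + 1) / (m + 1 - k)] is nondecreasing in [k]. *)
Lemma bin_TP2S m [k1 k2] : (k1 <= k2)%N ->
  ('C(m, k2) * 'C(m.+1, k1) <= 'C(m, k1) * 'C(m.+1, k2))%N.
Proof.
move=> le_k; have [lt_m|le_k2m] := ltnP m k2; first by rewrite bin_small.
have E1 := mul_bin_down m.+1 k1; have E2 := mul_bin_down m.+1 k2.
rewrite -(@leq_pmul2r ((m.+1 - k1) * (m.+1 - k2))) ?muln_gt0; last by lia.
have -> : ('C(m, k2) * 'C(m.+1, k1) * ((m.+1 - k1) * (m.+1 - k2)) =
   (m.+1 - k2) * ('C(m, k2) * ((m.+1 - k1) * 'C(m.+1, k1))))%N by ring.
have -> : ('C(m, k1) * 'C(m.+1, k2) * ((m.+1 - k1) * (m.+1 - k2)) =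
   (m.+1 - k1) * ('C(m, k1) * ((m.+1 - k2) * 'C(m.+1, k2))))%N by ring.
rewrite -E1 -E2.
have -> : ('C(m, k2) * (m.+1 * 'C(m, k1)) = 'C(m, k1) * (m.+1 * 'C(m, k2)))%N
  by ring.
by apply: leq_mul => //; lia.
Qed.

Lemma bin_TP2 [m1 m2 k1 k2] : (m1 <= m2)%N -> (k1 <= k2)%N ->
  ('C(m1, k2) * 'C(m2, k1) <= 'C(m1, k1) * 'C(m2, k2))%N.
Proof.
move=> /subnKC <-; move: (m2 - m1)%N => d le_k.
elim: d => [|d IHd]; first by rewrite addn0 mulnC.
have [lt_m|le_k2m] := ltnP (m1 + d)%N k2.
  by rewrite (@bin_small m1 k2) ?mul0n //; lia.
have Ck1_gt0 : (0 < 'C(m1 + d, k1))%N by rewrite bin_gt0; lia.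
have Ck2_gt0 : (0 < 'C(m1 + d, k2))%N by rewrite bin_gt0.
rewrite addnS -(@leq_pmul2r ('C(m1 + d, k1) * 'C(m1 + d, k2))) ?muln_gt0 ?Ck1_gt0 //.
have := leq_mul IHd (bin_TP2S (m1 + d) le_k).
by congr (_ <= _)%N; ring.
Qed.

Definition hyp_weight (N n m k : nat) : nat := 'C(m, k) * 'C(N - m, n - k).

Lemma hyp_weight_TP2 N n [m1 m2 k1 k2] : (m1 <= m2)%N -> (k1 <= k2)%N ->
  (hyp_weight N n m1 k2 * hyp_weight N n m2 k1 <=
   hyp_weight N n m1 k1 * hyp_weight N n m2 k2)%N.
Proof.
move=> le_m le_k; rewrite /hyp_weight.
have := leq_mul (bin_TP2 le_m le_k)
  (@bin_TP2 (N - m2) (N - m1) (n - k2) (n - k1) ltac:(lia) ltac:(lia)).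
by congr (_ <= _)%N; ring.
Qed.

Lemma hyp_weight_sum_le N n [m] a [b] : (m <= N)%N -> (b <= n.+1)%N ->
  (\sum_(a <= x < b) hyp_weight N n m x <= 'C(N, n))%N.
Proof.
move=> le_mN le_b; have [le_ab|lt_ba] := leqP a b; last by rewrite big_geq // ltnW.
have := binomial.Vandermonde m (N - m) n; rewrite subnKC // => <-.
rewrite -(big_mkord xpredT (hyp_weight N n m)).
rewrite (@big_cat_nat _ _ _ b 0 n.+1) //= (@big_cat_nat _ _ _ a 0 b) //=.
by rewrite addnC addnA leq_addl.
Qed.

Local Open Scope ring_scope.

Lemma hyp_pmfE (F : realFieldType) N R n x :
  hyp_pmf F N R n x = (hyp_weight N n R x)%:R / ('C(N, n))%:R.
Proof.
rewrite /hyp_pmf /hyp_weight; case: ifP => // /negbT.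
by rewrite negb_and -!ltnNge => /orP[] /bin_small ->; rewrite ?muln0 mul0r.
Qed.

Lemma hyp_pmf_sum_le_ratio (F : realFieldType) theta K D N R n a b :
  (theta <= N)%N -> (n <= N)%N -> (b <= n.+1)%N -> (0 < D)%N ->
  (forall x, (a <= x < b)%N ->
     hyp_weight N n R x * D <= K * hyp_weight N n theta x)%N ->
  \sum_(a <= x < b) hyp_pmf F N R n x <= K%:R / D%:R :> F.
Proof.
move=> le_thN le_nN le_b D_gt0 le_w.
have C_gt0 : (0 < 'C(N, n))%N by rewrite bin_gt0.
under eq_bigr do rewrite hyp_pmfE.
rewrite -mulr_suml -natr_sum ler_pdivrMr ?ltr0n // mulrAC ler_pdivlMr ?ltr0n //.
rewrite -!natrM ler_nat.
apply: leq_trans _ (leq_mul (leqnn K) (hyp_weight_sum_le _ _ a le_thN le_b)).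
rewrite big_distrl big_distrr /= big_nat_cond [X in (_ <= X)%N]big_nat_cond.
by apply: leq_sum => x /andP[/le_w].
Qed.

Theorem lemma6 (F : realFieldType) (N R n r : nat) :
  (0 < N)%N -> (R <= N)%N -> (1 <= n)%N -> (n <= N)%N ->
  (r <= n)%N -> (R + n <= r + N)%N -> (r <= R)%N ->
  (forall theta : nat, (r <= theta <= R)%N ->
     hyp_cdf_le F N R n r <= hyp_bound F N R n r theta) /\
  (forall theta : nat, (R <= theta <= r + N - n)%N ->
     hyp_cdf_ge F N R n r <= hyp_bound F N R n r theta).
Proof.
move=> _ le_RN _ le_nN le_rn le_RnrN le_rR.
have w_gt0 theta : (r <= theta)%N -> (n - r <= N - theta)%N ->
    (0 < hyp_weight N n theta r)%N.
  by move=> le_r le_nr; rewrite muln_gt0 !bin_gt0 le_r le_nr.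
split=> theta /andP[le_lo le_hi].
- apply: (hyp_pmf_sum_le_ratio _ theta (hyp_weight N n R r)
           (hyp_weight N n theta r)); try lia.
  + by apply: w_gt0; lia.
  move=> x /andP[_]; rewrite ltnS => le_xr; rewrite mulnC [X in (_ <= X)%N]mulnC.
  exact: hyp_weight_TP2 le_hi le_xr.
- apply: (hyp_pmf_sum_le_ratio _ theta (hyp_weight N n R r)
           (hyp_weight N n theta r)); try lia.
  + by apply: w_gt0; lia.
  by move=> x /andP[le_rx _]; apply: hyp_weight_TP2.
Qed.
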